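(* Let $R$ be a commutative ring, $S$ a multiplicative subset of $R$, and $f:M\to N$ an $R$-homomorphism between $u$-$S$-coherent $R$-modules $M$ and $N$. Then $\mathrm{Ker}(f)$, $\mathrm{Im}(f)$ and $\mathrm{Coker}(f)$ are $u$-$S$-coherent.
   Context: A multiplicative subset $S$ contains $1$ and is closed under products. $M$ is $S$-finite with respect to $s\in S$ if there is a finitely generated submodule $F\subseteq M$ with $sM\subseteq F$. $M$ is $u$-$S$-finitely presented with respect to $s$ if there is an exact sequence $0\to T_1\to F\to M\to T_2\to 0$ with $F$ finitely presented and $sT_1=sT_2=0$. $M$ is $u$-$S$-coherent if there is $s\in S$ such that $M$ is $S$-finite with respect to $s$ and every finitely generated submodule of $M$ is $u$-$S$-finitely presented with respect to $s$. *)

From HB Require Import structures.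
From mathcomp Require Import all_boot all_order all_algebra.

Set Implicit Arguments.
Unset Strict Implicit.
Unset Printing Implicit Defensive.

Import GRing.Theory.
Local Open Scope ring_scope.

Section UScoherent.
Variable R : comPzRingType.

Definition multiplicative_subset (S : {pred R}) : Prop :=
  1 \in S /\ forall a b, a \in S -> b \in S -> a * b \in S.

Definition span_of (M : lmodType R) (g : seq M) (x : M) : Prop :=
  exists c : 'I_(size g) -> R, x = \sum_(i < size g) c i *: g`_i.

Definition fin_presented (M : lmodType R) : Prop :=
  exists g : seq M,
    (forall x : M, span_of g x) /\
    exists rel : seq 'rV[R]_(size g),
      forall c : 'rV[R]_(size g),
        (\sum_(i < size g) c 0 i *: g`_i = 0) <-> span_of rel c.

Definition S_finite_wrt (M : lmodType R) (s : R) : Prop :=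
  exists g : seq M, forall x : M, span_of g (s *: x).

Definition uS_fin_presented_wrt (M : lmodType R) (s : R) : Prop :=
  exists (T1 F T2 : lmodType R)
         (i : {linear T1 -> F}) (phi : {linear F -> M}) (p : {linear M -> T2}),
    fin_presented F /\
    injective i /\
    (forall y : F, (exists x, i x = y) <-> phi y = 0) /\
    (forall m : M, (exists y, phi y = m) <-> p m = 0) /\
    (forall t : T2, exists m, p m = t) /\
    (forall t : T1, s *: t = 0) /\
    (forall t : T2, s *: t = 0).

Definition is_submodule_copy (M K : lmodType R) (j : {linear K -> M})
    (P : M -> Prop) : Prop :=
  injective j /\ forall m : M, (exists k, j k = m) <-> P m.

(* A finitely generated submodule span_of g is represented by any module K
   embedded in M with image span_of g. *)
Definition uS_coherent (S : {pred R}) (M : lmodType R) : Prop :=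
  exists2 s, s \in S &
    S_finite_wrt M s /\
    forall (g : seq M) (K : lmodType R) (j : {linear K -> M}),
      is_submodule_copy j (span_of g) -> uS_fin_presented_wrt K s.

End UScoherent.

(* For a finite family v in a module X, u-S-finite presentation of the
   submodule spanned by v is tied to S-finiteness of its module of relations
   (the kernel of R^n -> X).  If span(v) is u-S-finitely presented w.r.t. t,
   comparing the given finite presentation F -> span(v) with R^n -> span(v)
   (Schanuel) shows that the relations of v are S-finite w.r.t. t^2;
   conversely, if they are S-finite w.r.t. t, then R^n modulo finitely many
   relations maps onto span(v) with kernel killed by t.
   Ker f and Im f inherit S-finiteness from M and from the relations of the
   images in N of generators of M, and their finitely generated submodules
   are those of M and N.  A finitely generated submodule of Coker f is
   spanned by the images of some u in N; its relations are the first halves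
   of the relations in N of the concatenated family (u, f(generators of M)),
   up to the factor by which M is S-finite. *)

From HB Require Import structures.
From mathcomp Require Import all_boot all_order all_algebra.
From mathcomp Require Import boolp.

Set Implicit Arguments.
Unset Strict Implicit.
Unset Printing Implicit Defensive.

Import GRing.Theory.
Local Open Scope ring_scope.
Local Open Scope quotient_scope.

Section SubAndQuotientModules.
Variables (R : comPzRingType) (M : lmodType R).

Definition prop_submod_closed (P : M -> Prop) :=
  P 0 /\ forall a x y, P x -> P y -> P (a *: x + y).

Variables (P : M -> Prop) (hP : prop_submod_closed P).

(* The closedness proof is a phantom argument: the canonical submodClosed
   instance, and with it the module structures below, are keyed on it. *)
Definition submod_pred of prop_submod_closed P : {pred M} := fun x => `[< P x >].

Lemma submod_pred_closed : submod_closed (submod_pred hP).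
Proof.
split; first by apply/asboolP; case: hP.
by move=> a x y /asboolP Px /asboolP Py; apply/asboolP; apply: hP.2.
Qed.

HB.instance Definition _ :=
  GRing.isSubmodClosed.Build R M (submod_pred hP) submod_pred_closed.

Definition sub_lmod := {x : M | x \in submod_pred hP}.

HB.instance Definition _ := [isSub of sub_lmod for @sval M _].
HB.instance Definition _ := [Choice of sub_lmod by <:].
HB.instance Definition _ := [SubChoice_isSubLmodule of sub_lmod by <:].

Lemma sub_lmod_copy : is_submodule_copy (val : {linear sub_lmod -> M}) P.
Proof.
split=> [|m]; first exact: val_inj.
split=> [[x <-]|Pm]; first exact/asboolP/(valP x).
have Pm_in : m \in submod_pred hP by apply/asboolP.
by exists (exist _ m Pm_in).
Qed.

Local Notation quot := (Quotient.quot (submod_pred hP)).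

Definition quot_scale (a : R) (x : quot) : quot := \pi_quot (a *: repr x).

Lemma pi_scale a (x : M) : \pi_quot (a *: x) = quot_scale a (\pi x).
Proof.
apply/eqP; rewrite /quot_scale -Quotient.idealrBE -scalerBr rpredZ //.
by rewrite Quotient.idealrBE reprK.
Qed.

Lemma quot_scaleA a b x : quot_scale a (quot_scale b x) = quot_scale (a * b) x.
Proof. by elim/quotW: x => x; rewrite -(pi_scale b) -!pi_scale scalerA. Qed.

Lemma quot_scale1 : left_id 1 quot_scale.
Proof. by elim/quotW => x; rewrite -pi_scale scale1r. Qed.

Lemma quot_scaleDr : right_distributive quot_scale +%R.
Proof.
move=> a x y; elim/quotW: x => x; elim/quotW: y => y.
by rewrite -!pi_scale -!pi_addr -pi_scale scalerDr.
Qed.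

Lemma quot_scaleDl x : {morph quot_scale^~ x : a b / a + b}.
Proof. by move=> a b; elim/quotW: x => x; rewrite -!pi_scale scalerDl pi_addr. Qed.

HB.instance Definition _ := GRing.Zmodule_isLmodule.Build R quot
  quot_scaleA quot_scale1 quot_scaleDr quot_scaleDl.

Lemma pi_scalable : scalable \pi_quot.
Proof. exact: pi_scale. Qed.

HB.instance Definition _ := GRing.isScalable.Build R M quot _ \pi_quot pi_scalable.

Lemma pi_eq0 (x : M) : \pi_quot x = 0 <-> P x.
Proof.
rewrite -[0 : quot](raddf0 \pi_quot); split.
  by move/eqP; rewrite -Quotient.idealrBE subr0 => /asboolP.
by move=> Px; apply/eqP; rewrite -Quotient.idealrBE subr0; apply/asboolP.
Qed.

End SubAndQuotientModules.

Notation quot_lmod hP := (Quotient.quot (submod_pred hP)).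

Section LinearCombinations.
Variables (R : comPzRingType) (X : lmodType R).

Definition lcomb n (v : 'I_n -> X) (l : 'rV[R]_n) : X := \sum_(i < n) l 0 i *: v i.

Lemma lcomb_is_linear n (v : 'I_n -> X) : linear (lcomb v).
Proof.
move=> a l l'; rewrite /lcomb scaler_sumr -big_split /=; apply: eq_bigr => i _.
by rewrite !mxE scalerDl scalerA.
Qed.

HB.instance Definition _ n (v : 'I_n -> X) :=
  GRing.isLinear.Build R 'rV[R]_n X _ (lcomb v) (lcomb_is_linear v).

Definition in_span n (v : 'I_n -> X) (x : X) := exists l, lcomb v l = x.

Definition relations n (v : 'I_n -> X) (l : 'rV[R]_n) := lcomb v l = 0.

Definition seq_fam (g : seq X) (i : 'I_(size g)) := g`_i.

Definition cat_fam n k (v : 'I_n -> X) (w : 'I_k -> X) (i : 'I_(n + k)) :=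
  match split i with inl a => v a | inr b => w b end.

Lemma lcomb_delta n (v : 'I_n -> X) i : lcomb v (delta_mx 0 i) = v i.
Proof.
rewrite /lcomb (bigD1 i) //= big1 ?addr0 => [|j ji]; first by rewrite mxE !eqxx scale1r.
by rewrite mxE eqxx (negbTE ji) scale0r.
Qed.

Lemma lcombfZ n (v : 'I_n -> X) a l : lcomb (fun i => a *: v i) l = a *: lcomb v l.
Proof. by rewrite /lcomb scaler_sumr; apply: eq_bigr => i _; rewrite !scalerA mulrC. Qed.

Lemma lcombfB n (v w : 'I_n -> X) l :
  lcomb (fun i => v i - w i) l = lcomb v l - lcomb w l.
Proof. by rewrite /lcomb -sumrB; apply: eq_bigr => i _; rewrite scalerBr. Qed.

Lemma lcomb_cat n k (v : 'I_n -> X) (w : 'I_k -> X) l :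
  lcomb (cat_fam v w) l = lcomb v (lsubmx l) + lcomb w (rsubmx l).
Proof.
rewrite /lcomb big_split_ord; congr (_ + _); apply: eq_bigr => i _.
  by rewrite mxE /cat_fam (unsplitK (inl i) : split (lshift k i) = inl i).
by rewrite mxE /cat_fam (unsplitK (inr i) : split (rshift n i) = inr i).
Qed.

Lemma lcomb_closed (Q : X -> Prop) n (v : 'I_n -> X) l :
  prop_submod_closed Q -> (forall i, Q (v i)) -> Q (lcomb v l).
Proof.
move=> [Q0 QD] Qv; rewrite /lcomb; elim/big_ind: _ => // [x y Qx Qy|i _].
  by rewrite -[x]scale1r; apply: QD.
by rewrite -[_ *: _]addr0; apply: QD.
Qed.

End LinearCombinations.

Arguments seq_fam {R X} g i.

Lemma lcomb_deltas (R : comPzRingType) n (l : 'rV[R]_n) : lcomb (delta_mx 0) l = l.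
Proof. by rewrite [RHS]row_sum_delta. Qed.

Section LinearMaps.
Variables (R : comPzRingType) (X Y : lmodType R) (h : {linear X -> Y}).

Lemma lcomb_map n (v : 'I_n -> X) l : h (lcomb v l) = lcomb (fun i => h (v i)) l.
Proof. by rewrite linear_sum; apply: eq_bigr => i _; rewrite linearZ. Qed.

Lemma kernel_closed : prop_submod_closed (fun x => h x = 0).
Proof.
by split=> [|a x y hx hy]; rewrite ?linear0 // linearP hx hy scaler0 addr0.
Qed.

Lemma image_closed : prop_submod_closed (fun y => exists x, h x = y).
Proof.
split=> [|a _ _ [x <-] [y <-]]; first by exists 0; rewrite linear0.
by exists (a *: x + y); rewrite linearP.
Qed.

End LinearMaps.

Section Spans.
Variables (R : comPzRingType) (X : lmodType R).

Lemma in_span_closed n (v : 'I_n -> X) : prop_submod_closed (in_span v).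
Proof. exact: (image_closed (lcomb v)). Qed.

Lemma span_ofE (g : seq X) x : span_of g x <-> in_span (seq_fam g) x.
Proof.
split=> [[c ->]|[l <-]]; last by exists (fun i => l 0 i).
by exists (\row_i c i); apply: eq_bigr => i _; rewrite mxE.
Qed.

Lemma span_of_closed (g : seq X) : prop_submod_closed (span_of g).
Proof.
have [S0 SD] := in_span_closed (seq_fam g).
by split=> [|a x y /span_ofE Sx /span_ofE Sy]; apply/span_ofE; [|apply: SD].
Qed.

Lemma span_of_mem (g : seq X) y : y \in g -> span_of g y.
Proof.
move=> yg; apply/span_ofE; exists (delta_mx 0 (Ordinal (etrans (index_mem y g) yg))).
by rewrite lcomb_delta /seq_fam nth_index.
Qed.

Lemma span_of_min (Q : X -> Prop) (g : seq X) x :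
  prop_submod_closed Q -> (forall y, y \in g -> Q y) -> span_of g x -> Q x.
Proof.
move=> hQ Qg /span_ofE [l <-]; apply: lcomb_closed => // i.
by apply: Qg; apply: mem_nth.
Qed.

Lemma span_of_enum n (v : 'I_n -> X) x :
  span_of [seq v i | i <- enum 'I_n] x <-> in_span v x.
Proof.
split; first by apply: span_of_min => [|_ /mapP [i _ ->]];
  [exact: in_span_closed | exists (delta_mx 0 i); rewrite lcomb_delta].
case=> l <-; apply: lcomb_closed => [|i]; first exact: span_of_closed.
by apply: span_of_mem; rewrite map_f ?mem_enum.
Qed.

Lemma span_of_sub (g g' : seq X) x :
  (forall y, y \in g -> span_of g' y) -> span_of g x -> span_of g' x.
Proof. by move=> sub; apply: span_of_min => //; apply: span_of_closed. Qed.

End Spans.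

Section SpanMaps.
Variables (R : comPzRingType) (X Y : lmodType R) (h : {linear X -> Y}).

Lemma span_of_map (g : seq X) x : span_of g x -> span_of (map h g) (h x).
Proof.
apply: (span_of_min (Q := fun x => span_of (map h g) (h x))) => [|y yg] /=;
  last by apply: span_of_mem; apply: map_f.
have [S0 SD] := span_of_closed (map h g).
by split=> [|a x' y' Sx Sy]; rewrite ?linear0 // linearP; apply: SD.
Qed.

Lemma span_of_map_preim (g : seq X) y :
  span_of (map h g) y -> exists2 x, span_of g x & h x = y.
Proof.
apply: (span_of_min (Q := fun y => exists2 x, span_of g x & h x = y));
  last by move=> _ /mapP [x xg ->]; exists x => //; apply: span_of_mem.
have [S0 SD] := span_of_closed g.
split=> [|a _ _ [x Sx <-] [x' Sx' <-]]; first by exists 0; rewrite ?linear0.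
by exists (a *: x + x'); [apply: SD | rewrite linearP].
Qed.

End SpanMaps.

Section SFinite.
Variable R : comPzRingType.

Definition S_finite_in (X : lmodType R) (P : X -> Prop) (s : R) :=
  exists2 g : seq X, (forall y, y \in g -> P y) & forall x, P x -> span_of g (s *: x).

Lemma S_finite_wrt_in (X : lmodType R) s :
  S_finite_wrt X s <-> S_finite_in (fun _ : X => True) s.
Proof. by split=> [[g Sg]|[g _ Sg]]; exists g => // x; apply: Sg. Qed.

Lemma S_finite_in_transfer (A B : lmodType R) (phi : {linear A -> B})
    (P : A -> Prop) (Q : B -> Prop) t s :
  (forall x, P x -> Q (phi x)) -> (forall y, Q y -> exists2 x, P x & phi x = s *: y) ->
  S_finite_in P t -> S_finite_in Q (t * s).
Proof.
move=> PQ Qlift [g Pg Sg]; exists (map phi g) => [_ /mapP [x xg ->]|y Qy].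
  by apply: PQ; apply: Pg.
have [x Px phix] := Qlift y Qy.
by rewrite -scalerA -phix -linearZZ; apply: span_of_map; apply: Sg.
Qed.

Lemma seq_preimage (A : Type) (B : eqType) (h : A -> B) (g : seq B) :
  (forall y, y \in g -> exists x, h x = y) -> exists g', map h g' = g.
Proof.
elim: g => [|y g IHg] im_g; first by exists [::].
have [x <-] := im_g y (mem_head y g).
have [|g' <-] := IHg => [z zg|]; first by apply: im_g; rewrite in_cons zg orbT.
by exists (x :: g').
Qed.

Lemma S_finite_of_copy (K X : lmodType R) (j : {linear K -> X}) (P : X -> Prop) s :
  is_submodule_copy j P -> S_finite_in P s -> S_finite_wrt K s.
Proof.
move=> [j_inj j_im] [g Pg Sg].
have [g' gg'] : exists g', map j g' = g by apply: seq_preimage => y /Pg /j_im.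
exists g' => x.
have /span_of_map_preim [x' Sx' /j_inj <-] // : span_of (map j g') (j (s *: x)).
by rewrite gg' linearZZ; apply: Sg; apply/j_im; exists x.
Qed.

Lemma S_finite_kernel (M N : lmodType R) (f : {linear M -> N}) (gM : seq M) sM t :
  (forall x, span_of gM (sM *: x)) ->
  S_finite_in (relations (fun i => f (seq_fam gM i))) t ->
  S_finite_in (fun x => f x = 0) (t * sM).
Proof.
move=> SgM; apply: (S_finite_in_transfer (phi := lcomb (seq_fam gM))) => [l|x fx0].
  by rewrite /relations -lcomb_map.
have /span_ofE [l lx] := SgM x; exists l => //.
by rewrite /relations -lcomb_map lx linearZZ fx0 scaler0.
Qed.

Lemma S_finite_image (M N : lmodType R) (f : {linear M -> N}) s :
  S_finite_wrt M s -> S_finite_in (fun y => exists x, f x = y) s.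
Proof.
move/S_finite_wrt_in => S_M; rewrite -[s]mulr1.
apply: (S_finite_in_transfer (phi := f) _ _ S_M) => [x _|_ [x <-]]; first by exists x.
by exists x; rewrite ?scale1r.
Qed.

Lemma S_finite_surj (N C : lmodType R) (q : {linear N -> C}) s :
  (forall c, exists y, q y = c) -> S_finite_wrt N s -> S_finite_wrt C s.
Proof.
move=> q_surj /S_finite_wrt_in S_N; apply/S_finite_wrt_in; rewrite -[s]mulr1.
apply: (S_finite_in_transfer (phi := q) _ _ S_N) => // c _.
by have [y <-] := q_surj c; exists y; rewrite ?scale1r.
Qed.

End SFinite.

Section Presentations.
Variable R : comPzRingType.
Implicit Types X Y F K : lmodType R.

Lemma linear_factor_quot X Y (P : X -> Prop) (hP : prop_submod_closed P)
    (h : {linear X -> Y}) :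
  (forall x, P x -> h x = 0) ->
  exists h' : {linear quot_lmod hP -> Y}, forall x, h' (\pi x) = h x.
Proof.
move=> h_P; have h_repr x : h (repr (\pi_(quot_lmod hP) x)) = h x.
  apply/eqP; rewrite -subr_eq0 -linearB; apply/eqP/h_P/pi_eq0.
  by rewrite linearB /= reprK subrr.
pose h' (y : quot_lmod hP) := h (repr y).
have h'_lin : linear h'.
  move=> a y z; elim/quotW: y => y; elim/quotW: z => z.
  by rewrite /h' -linearP !h_repr linearP.
by exists (HB.pack_for {linear quot_lmod hP -> Y} h'
  (GRing.isLinear.Build R (quot_lmod hP) Y _ h' h'_lin)).
Qed.

Lemma linear_lift_inj (A K X : lmodType R) (j : {linear K -> X}) (h : {linear A -> X}) :
  injective j -> (forall a, exists k, j k = h a) ->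
  exists h' : {linear A -> K}, forall a, j (h' a) = h a.
Proof.
move=> j_inj /choice [h' jh'].
have h'_lin : linear h' by move=> c a b; apply: j_inj; rewrite linearP !jh' linearP.
by exists (HB.pack_for {linear A -> K} h' (GRing.isLinear.Build R A K _ h' h'_lin)).
Qed.

Lemma uSfp_of_map K F (phi : {linear F -> K}) s :
  fin_presented F -> (forall y, phi y = 0 -> s *: y = 0) ->
  (forall x, exists y, phi y = s *: x) -> uS_fin_presented_wrt K s.
Proof.
move=> F_fp ker_s im_s; have [i_inj i_im] := sub_lmod_copy (kernel_closed phi).
exists (sub_lmod (kernel_closed phi)), F, (quot_lmod (image_closed phi)), val, phi, \pi.
split=> //; split=> //; split=> //; split=> [m|]; first exact: iff_sym (pi_eq0 _ m).
split=> [t|]; first by exists (repr t); apply: reprK.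
split=> t; last by elim/quotW: t => m; rewrite -linearZZ; apply/pi_eq0/im_s.
by apply: val_inj; rewrite linearZZ /= ker_s //; apply/i_im; exists t.
Qed.

Lemma fin_presented_quot n (L : seq 'rV[R]_n) :
  fin_presented (quot_lmod (span_of_closed L)).
Proof.
pose e (i : 'I_n) := \pi_(quot_lmod (span_of_closed L)) (delta_mx 0 i : 'rV[R]_n).
have lcomb_e l : lcomb e l = \pi l by rewrite -[in RHS](lcomb_deltas l) lcomb_map.
pose g := [seq e i | i <- enum 'I_n].
have g_e (i : 'I_n) : g`_i = e i by rewrite (nth_map i) ?size_enum_ord ?nth_ord_enum.
have size_g : size g = n by rewrite size_map size_enum_ord.
exists g; split=> [y|]; first by apply/span_of_enum; elim/quotW: y => l; exists l.
(* fin_presented indexes relations by size g, which is n only propositionally *)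
move: (size g) size_g g_e => m size_g g_e; subst m; exists L => c.
rewrite (eq_bigr (fun i => c 0 i *: e i)) => [|i _]; last by rewrite g_e.
by change (lcomb e c = 0 <-> span_of L c); rewrite lcomb_e; apply: pi_eq0.
Qed.

Lemma uSfp_of_relations X n (v : 'I_n -> X) K (j : {linear K -> X}) t :
  is_submodule_copy j (in_span v) -> S_finite_in (relations v) t ->
  uS_fin_presented_wrt K t.
Proof.
move=> [j_inj j_im] [L L_rel L_gen].
have [h h_pi] : exists h : {linear quot_lmod (span_of_closed L) -> X},
    forall l, h (\pi l) = lcomb v l.
  by apply: linear_factor_quot => l; apply: span_of_min L_rel; apply: kernel_closed.
have [phi j_phi] : exists phi : {linear quot_lmod (span_of_closed L) -> K},
    forall y, j (phi y) = h y.
  by apply: linear_lift_inj => // y; apply/j_im; elim/quotW: y => l; exists l.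
apply: (uSfp_of_map (phi := phi)); first exact: fin_presented_quot.
  move=> y; elim/quotW: y => l /(congr1 j); rewrite j_phi h_pi linear0 => /L_gen.
  by rewrite -linearZZ => Ltl; apply/pi_eq0.
move=> x; have [l lx] : in_span v (j x) by apply/j_im; exists x.
exists (\pi_(quot_lmod (span_of_closed L)) (t *: l)); apply: j_inj.
by rewrite j_phi h_pi [RHS]linearZZ -lx linearZZ.
Qed.

End Presentations.

Section RelationModules.
Variable R : comPzRingType.
Implicit Types X F K M N C : lmodType R.

Definition fg_uSfp X (s : R) := forall g K (j : {linear K -> X}),
  is_submodule_copy j (span_of g) -> uS_fin_presented_wrt K s.

Definition S_finite_relations X (t : R) :=
  forall n (v : 'I_n -> X), S_finite_in (relations v) t.

Lemma relations_S_finite_of_presentation X F n (v : 'I_n -> X)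
    (psi : {linear F -> X}) t :
  fin_presented F -> (forall y, psi y = 0 -> t *: y = 0) ->
  (forall i, exists y, psi y = t *: v i) -> (forall y, in_span v (psi y)) ->
  S_finite_in (relations v) (t * t).
Proof.
move=> [gF [gF_span [rel relP]]] psi_ker psi_im psi_span; pose e := seq_fam gF.
have [a psi_a] : {a : 'I_n -> 'rV_(size gF) & forall i, psi (lcomb e (a i)) = t *: v i}.
  apply: (choice (P := fun i a => psi (lcomb e a) = t *: v i)) => i.
  have [y <-] := psi_im i.
  by have /span_ofE [c <-] := gF_span y; exists c.
have [d d_e] : {d : 'I_(size gF) -> 'rV_n & forall k, lcomb v (d k) = psi (e k)}.
  by apply: (choice (P := fun k d => lcomb v d = psi (e k))) => k; apply: psi_span.
have lcomb_d mu : lcomb v (lcomb d mu) = psi (lcomb e mu).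
  rewrite (lcomb_map (lcomb v)) (lcomb_map psi).
  by congr lcomb; apply: funext => k; apply: d_e.
have psi_lcomb_a la : psi (lcomb e (lcomb a la)) = t *: lcomb v la.
  rewrite (lcomb_map (lcomb e)) (lcomb_map psi) -lcombfZ.
  by congr lcomb; apply: funext => i; apply: psi_a.
(* With A := lcomb a and D := lcomb d, a relation la of v satisfies
   t^2 la = t (t la - D (A la)) + D (t A la), where t A la is a relation of
   the presentation of F. *)
pose w i := t *: delta_mx 0 i - lcomb d (a i).
have lcomb_w la : lcomb w la = t *: la - lcomb d (lcomb a la).
  by rewrite lcombfB lcombfZ lcomb_deltas (lcomb_map (lcomb d)).
exists ([seq w i | i <- enum 'I_n] ++ [seq lcomb d r | r <- rel]).
  move=> l; rewrite mem_cat => /orP [] /mapP [x x_in ->]; rewrite /relations.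
    by rewrite linearB linearZZ /= lcomb_delta lcomb_d psi_a subrr.
  have ex0 : lcomb e x = 0 by apply/relP; apply: span_of_mem.
  by rewrite lcomb_d ex0 linear0.
move=> la la_rel; pose mu := lcomb a la.
have t_mu : span_of rel (t *: mu).
  apply/relP; change (lcomb e (t *: mu) = 0); rewrite linearZZ; apply: psi_ker.
  by rewrite psi_lcomb_a la_rel scaler0.
have -> : (t * t) *: la = t *: lcomb w la + lcomb d (t *: mu).
  by rewrite lcomb_w linearZZ scalerBr scalerA subrK.
apply: (span_of_closed _).2.
  apply: lcomb_closed => [|i]; first exact: span_of_closed.
  by apply: span_of_mem; rewrite mem_cat map_f ?mem_enum.
apply: span_of_sub (span_of_map (lcomb d) t_mu) => y y_in.
by apply: span_of_mem; rewrite mem_cat y_in orbT.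
Qed.

Lemma fg_uSfp_relations X t : fg_uSfp X t -> S_finite_relations X (t * t).
Proof.
move=> X_fg n v; have hS := span_of_closed [seq v i | i <- enum 'I_n].
have [j_inj j_im] := sub_lmod_copy hS.
have [T1 [F [T2 [i [phi [p [F_fp [_ [ker_phi [ker_p [_ [T1_t T2_t]]]]]]]]]]]] :=
  X_fg _ _ _ (sub_lmod_copy hS).
apply: (relations_S_finite_of_presentation (psi := val \o phi)) => // [y|k|y].
- move=> phi_y; have /ker_phi [x <-] : phi y = 0 by apply: val_inj; rewrite linear0.
  by rewrite -linearZZ T1_t linear0.
- have [z zv] : exists z : sub_lmod hS, val z = v k.
    by apply/j_im/span_of_enum; exists (delta_mx 0 k); rewrite lcomb_delta.
  have /ker_p [y phi_y] : p (t *: z) = 0 by rewrite linearZZ T2_t.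
  by exists y; rewrite -zv -linearZZ -phi_y.
- by apply/span_of_enum/j_im; exists (phi y).
Qed.

Lemma fg_uSfp_copy K X (j : {linear K -> X}) s :
  injective j -> fg_uSfp X s -> fg_uSfp K s.
Proof.
move=> j_inj X_fg g K' j' [j'_inj j'_im]; apply: (X_fg (map j g) K' (j \o j')).
split=> [x y /j_inj/j'_inj //|m]; split=> [[k <-]|/span_of_map_preim [x Sx <-]] /=.
  by apply: span_of_map; apply/j'_im; exists k.
by have [k <-] := proj2 (j'_im x) Sx; exists k.
Qed.

Lemma relations_coker M N C (f : {linear M -> N}) (q : {linear N -> C})
    (gM : seq M) sM t n (v : 'I_n -> C) :
  (forall c, exists y, q y = c) -> (forall y, q y = 0 <-> exists x, f x = y) ->
  (forall x, span_of gM (sM *: x)) ->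
  S_finite_relations N t ->
  S_finite_in (relations v) (t * sM).
Proof.
move=> q_surj q_ker SgM relN.
have [u qu] : {u : 'I_n -> N & forall i, q (u i) = v i}.
  exact: (choice (P := fun i y => q y = v i)).
have lcomb_qu l : lcomb v l = q (lcomb u l).
  by rewrite lcomb_map; congr lcomb; apply: funext => i; rewrite qu.
pose w := cat_fam u (fun k => f (seq_fam gM k)).
have lcomb_w l : lcomb w l = lcomb u (lsubmx l) + f (lcomb (seq_fam gM) (rsubmx l)).
  by rewrite lcomb_cat (lcomb_map f).
apply: (S_finite_in_transfer (phi := lsubmx) _ _ (relN _ w)) => [l|la].
  rewrite /relations lcomb_w lcomb_qu => /eqP; rewrite addr_eq0 => /eqP u_l.
  by apply/q_ker; exists (- lcomb (seq_fam gM) (rsubmx l)); rewrite linearN u_l.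
rewrite /relations lcomb_qu => /q_ker [x fx]; have /span_ofE [mu mux] := SgM x.
exists (row_mx (sM *: la) (- mu)); last exact: row_mxKl.
rewrite /relations lcomb_w row_mxKl row_mxKr !linearN /= mux.
by rewrite [f _]linearZZ fx [lcomb u _]linearZZ subrr.
Qed.

Lemma fg_uSfp_coker M N C (f : {linear M -> N}) (q : {linear N -> C})
    (gM : seq M) sM t :
  (forall c, exists y, q y = c) -> (forall y, q y = 0 <-> exists x, f x = y) ->
  (forall x, span_of gM (sM *: x)) ->
  S_finite_relations N t ->
  fg_uSfp C (t * sM).
Proof.
move=> q_surj q_ker SgM relN g K j [j_inj j_im].
apply: (uSfp_of_relations (v := seq_fam g)); last exact: relations_coker q_ker SgM relN.
split=> [|m]; first exact: j_inj.
by split=> [/j_im/span_ofE|/span_ofE/j_im].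
Qed.

Lemma uS_coherent_intro (S : {pred R}) X s1 s2 :
  multiplicative_subset S -> s1 \in S -> s2 \in S ->
  S_finite_wrt X s1 -> fg_uSfp X s2 -> uS_coherent S X.
Proof.
move=> [_ mulS] s1S s2S [g Sg] X_fg; exists (s1 * s2); first exact: mulS.
split=> [|g' K j /X_fg [T1 [F [T2 [i [phi [p [? [? [? [? [? [T1_s T2_s]]]]]]]]]]]]].
  by exists g => x; rewrite -scalerA.
exists T1, F, T2, i, phi, p; do 5 split=> //.
by split=> t; rewrite -scalerA ?T1_s ?T2_s scaler0.
Qed.

End RelationModules.

Theorem corollary3p3 (R : comPzRingType) (S : {pred R})
    (M N : lmodType R) (f : {linear M -> N}) :
  multiplicative_subset S ->
  uS_coherent S M -> uS_coherent S N ->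
  (* Ker(f): every module K embedded in M with image Ker f *)
  (forall (K : lmodType R) (j : {linear K -> M}),
      is_submodule_copy j (fun m => f m = 0) -> uS_coherent S K) /\
  (* Im(f): every module I embedded in N with image Im f *)
  (forall (I : lmodType R) (j : {linear I -> N}),
      is_submodule_copy j (fun n => exists m, f m = n) -> uS_coherent S I) /\
  (* Coker(f): every module C with a surjection q : N -> C whose kernel is Im f *)
  (forall (C : lmodType R) (q : {linear N -> C}),
      (forall c : C, exists n, q n = c) ->
      (forall n : N, q n = 0 <-> exists m, f m = n) ->
      uS_coherent S C).
Proof.
move=> mulS [sM sM_S [[gM SgM] M_fg]] [sN sN_S [N_fin N_fg]].
have relN := fg_uSfp_relations N_fg.
have sN2M_S : sN * sN * sM \in S by rewrite !mulS.2.
split; [|split].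
- move=> K j [j_inj j_im].
  apply: (uS_coherent_intro mulS sN2M_S sM_S); last exact: fg_uSfp_copy j_inj M_fg.
  exact: S_finite_of_copy (conj j_inj j_im) (S_finite_kernel SgM (relN _ _)).
- move=> I j [j_inj j_im].
  apply: (uS_coherent_intro mulS sM_S sN_S); last exact: fg_uSfp_copy j_inj N_fg.
  exact: S_finite_of_copy (conj j_inj j_im) (S_finite_image f (ex_intro _ gM SgM)).
- move=> C q q_surj q_ker.
  apply: (uS_coherent_intro mulS sN_S sN2M_S); first exact: S_finite_surj q_surj N_fin.
  exact: fg_uSfp_coker q_surj q_ker SgM relN.
Qed.
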